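(* With the notation below, for $1\le i\le r$ let $W_{p_i} = \eta_M(W) \cap \mathrm{GL}(e_i,p_i)$. Then: (a) $\eta_M(W) = W_{p_1}\times\cdots\times W_{p_r}$; (b) $W_{p_i} = \mathrm{Stab}_{C_{p_i}}([\epsilon_{p_i}])$ for $1 \le i \le r$.
   Context: Let $G$ be a finite group of $F$-class $\ge 1$ whose $F$-rank (the order $|\nu_0(G)/\nu_1(G)|$, where $\nu_0(G)=F(G)$ is the Fitting subgroup and $\nu_1(G)=\Phi(F(G))$) has prime divisors $p_1,\dots,p_r$, and $k=p_1\cdots p_r$. With $F$ free on $f_1,\dots,f_n$, $\mu:F\to G$ an epimorphism, $R=\ker\mu$, $L=\mu^{-1}(F(G))$, put $G^*=F/[R,L]R^k$ and $M=R/[R,L]R^k$, an abelian normal subgroup of $G^*$ with $G^*/M=G$. Then $M=M_{p_1}\times\cdots\times M_{p_r}$ with $M_{p_i}$ its Sylow $p_i$-subgroup, elementary abelian of rank $e_i$, so $\mathrm{Aut}(M)=\mathrm{GL}(e_1,p_1)\times\cdots\times\mathrm{GL}(e_r,p_r)$. $\mathrm{Aut}_M(G^* )$ is the group of automorphisms of $G^*$ leaving $M$ invariant; $\eta_G$ maps $\alpha$ to the induced automorphism of $G^*/M=G$, $\eta_M$ maps $\alpha$ to $\alpha|_M$, and $W=\ker\eta_G$. $G$ acts on $M$ via conjugation in $G^*$; $C_{p_i}$ is the centralizer in $\mathrm{Aut}(M_{p_i})=\mathrm{GL}(e_i,p_i)$ of the induced action of $G$ on $M_{p_i}$. Let $\epsilon\in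 Z^2(G,M)$ define $G^*$ as extension of $M$ by $G$ and write $\epsilon=\epsilon_{p_1}+\cdots+\epsilon_{p_r}$ with $\epsilon_{p_i}\in Z^2(G,M_{p_i})$ (using $Z^2(G,M)=\bigoplus_i Z^2(G,M_{p_i})$), and $[\epsilon_{p_i}]=\epsilon_{p_i}+B^2(G,M_{p_i})$. $C_{p_i}$ acts on $H^2(G,M_{p_i})$ via $c([\delta])=[c\circ\delta]$. *)

From HB Require Import structures.
From mathcomp Require Import all_boot all_fingroup all_solvable.
Set Implicit Arguments.
Unset Strict Implicit.
Unset Printing Implicit Defensive.
Local Open Scope group_scope.

Section ExtDefs.
Variable gT : finGroupType.

Definition AutInv (E M : {group gT}) : {set {perm gT}} :=
  [set a in Aut E | [set a x | x in M] == (M : {set gT})].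

(* W = ker eta_G: those alpha in Aut_M(E) inducing the identity on E/M. *)
Definition Wker (E M : {group gT}) : {set {perm gT}} :=
  [set a in AutInv E M | [forall x in E, coset M (a x) == coset M x]].

Definition etaMW (E M : {group gT}) : {set {perm gT}} :=
  [set restr_perm M a | a in Wker E M].

(* The factor GL(e_p, p) = Aut(M_p) of Aut(M) = prod_p Aut(M_p), viewed
   inside Aut M as the automorphisms acting trivially on the p'-part. *)
Definition AutComp (M : {group gT}) (p : nat) : {set {perm gT}} :=
  [set c in Aut M | [forall x in 'O_p^'(M), c x == x]].

Definition Cent_p (E M : {group gT}) (p : nat) : {set {perm gT}} :=
  [set c in AutComp M p |
     [forall y in E, forall m in 'O_p(M), c (m ^ y) == c m ^ y]].

Definition ext_cocycle (M : {group gT}) (s : coset_of M -> gT)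
  (g h : coset_of M) : gT := s g * s h * (s (g * h))^-1.

Definition ext_cocycle_p (M : {group gT}) (s : coset_of M -> gT) (p : nat)
  (g h : coset_of M) : gT := (ext_cocycle s g h).`_p.

(* delta in B^2(G, M_p) (multiplicative notation; G acts on the left by
   g . m = s(g) m s(g)^-1). *)
Definition is_coboundary_p (E M : {group gT}) (p : nat) (s : coset_of M -> gT)
  (delta : coset_of M -> coset_of M -> gT) : bool :=
  [exists f : {ffun coset_of M -> gT},
     [forall g in E / M, f g \in 'O_p(M)] &&
     [forall g in E / M, forall h in E / M,
        delta g h == f g * (f h) ^ (s g)^-1 * (f (g * h))^-1]].

(* Stab_{C_p}([epsilon_p]) : c([eps_p]) = [c o eps_p] equals [eps_p],
   i.e. c o eps_p - eps_p in B^2(G, M_p). *)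
Definition StabCoh (E M : {group gT}) (p : nat) (s : coset_of M -> gT)
  : {set {perm gT}} :=
  [set c in Cent_p E M p |
     is_coboundary_p E p s
       (fun g h => c (ext_cocycle_p s p g h) * (ext_cocycle_p s p g h)^-1)].

End ExtDefs.

(* Write M = \prod_p M_p (M_p = 'O_p(M)) and, for a set of primes pi, let
   AutPi pi be the automorphisms of M fixing the pi'-part of M pointwise;
   for a prime p this is the factor GL(e_p, p) = AutComp M p of Aut(M).
   Every automorphism c of M has a p-component acting as c on M_p and
   trivially on the p'-part, and the groups AutPi pi for disjoint sets of
   primes commute and intersect trivially.  Hence any subgroup H of Aut(M)
   containing the p-components of its elements is the direct product of the
   H :&: AutComp M p, p ranging over the primes of the exponent of M
   (section AbelianParts); this gives part (a) once eta_M(W) is known to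
   have that closure property.

   Both that property and part (b) come from the description of W_p
   (section Extension): the restriction to M_p of an element a of W commutes
   with the action of G and fixes [eps_p], the defect being the coboundary
   of the displacement g |-> a(s g) (s g)^-1; conversely an element c of
   C_p fixing [eps_p], with c o eps_p - eps_p = d f, lifts to the
   automorphism m s(g) |-> c(m) f(g) s(g) of E, which lies in W. *)

From HB Require Import structures.
From mathcomp Require Import all_boot all_fingroup all_solvable.
Set Implicit Arguments.
Unset Strict Implicit.
Unset Printing Implicit Defensive.
Local Open Scope group_scope.

Section AutFacts.
Variables (gT : finGroupType) (A : {group gT}) (c : {perm gT}).
Hypothesis Ac : c \in Aut A.

Lemma aut_mul x y : x \in A -> y \in A -> c (x * y) = c x * c y.
Proof. by move=> Ax Ay; rewrite -(autmE Ac) morphM. Qed.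

Lemma aut_inv x : x \in A -> c x^-1 = (c x)^-1.
Proof. by move=> Ax; rewrite -(autmE Ac) morphV. Qed.

Lemma aut_conj x y : x \in A -> y \in A -> c (x ^ y) = c x ^ c y.
Proof. by move=> Ax Ay; rewrite -(autmE Ac) morphJ. Qed.

Lemma aut_one : c 1 = 1.
Proof. by rewrite -(autmE Ac) morph1. Qed.

Lemma aut_constt pi x : x \in A -> c x.`_pi = (c x).`_pi.
Proof. by move=> Ax; rewrite -!(autmE Ac) morph_constt. Qed.

Lemma aut_p_elt pi x : x \in A -> pi.-elt x -> pi.-elt (c x).
Proof. by move=> Ax pix; rewrite -(autmE Ac) morph_p_elt. Qed.

End AutFacts.

Section AbelianParts.
Variables (gT : finGroupType) (M : {group gT}).
Hypothesis abM : abelian M.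

Lemma commM x y : x \in M -> y \in M -> commute x y.
Proof. by move=> Mx My; apply: (centsP abM). Qed.

Lemma conj_abelian x y : x \in M -> y \in M -> x ^ y = x.
Proof. by move=> Mx My; rewrite conjgE (commM Mx My) mulKg. Qed.

Lemma pcore_abelianE pi x : x \in M -> (x \in 'O_pi(M)) = pi.-elt x.
Proof.
by move=> Mx; rewrite (mem_Hall_pcore (nilpotent_pcore_Hall _ (abelian_nil abM))).
Qed.

Lemma constt_in x pi : x \in M -> x.`_pi \in M.
Proof.
move=> Mx; have sxM : <[x]> \subset M by rewrite cycle_subG.
exact: subsetP sxM _ (cycle_constt pi x).
Qed.

Lemma constt_pcore pi x : x \in M -> x.`_pi \in 'O_pi(M).
Proof. by move=> Mx; rewrite pcore_abelianE ?constt_in ?p_elt_constt. Qed.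

Lemma consttMM pi x y : x \in M -> y \in M -> (x * y).`_pi = x.`_pi * y.`_pi.
Proof. by move=> Mx My; apply/consttM/commM. Qed.

Definition AutPi (pi : nat_pred) : {set {perm gT}} :=
  'C_(Aut M)('O_pi^'(M) | 'P).

Canonical AutPi_group pi := Eval hnf in [group of AutPi pi].

(* Elementwise description of AutPi, valid because 'O_pi^'(M) is the set
   of pi'-elements of M. *)
Lemma AutPiP pi c : reflect (c \in Aut M /\ {in M, forall x, pi^'.-elt x -> c x = x})
  (c \in AutPi pi).
Proof.
apply: (iffP setIP) => [[Ac /astabP cfix]|[Ac cfix]]; split=> //.
  by move=> x Mx p'x; apply: (cfix x); rewrite pcore_abelianE.
apply/astabP => x Ox; have Mx : x \in M := subsetP (pcore_sub _ _) x Ox.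
by apply: cfix; rewrite -?pcore_abelianE.
Qed.

Lemma AutComp_AutPi (p : nat) : AutComp M p = AutPi p.
Proof.
apply/setP => c; rewrite inE; apply/andP/AutPiP => [[Ac /forallP cfix]|[Ac cfix]].
  split=> // x Mx p'x; apply/eqP; move: (cfix x); rewrite pcore_abelianE //.
  by rewrite p'x.
split=> //; apply/forallP => x; apply/implyP => Ox; apply/eqP.
have Mx := subsetP (pcore_sub _ _) x Ox.
by apply: cfix; rewrite -?pcore_abelianE.
Qed.

Lemma AutPiS pi1 pi2 : {subset pi1 <= pi2} -> AutPi pi1 \subset AutPi pi2.
Proof.
move=> s12; apply/subsetP => c /AutPiP[Ac cfix]; apply/AutPiP; split=> // x Mx.
by move=> p'x; apply: cfix => //; apply: sub_p_elt p'x => q; apply: contra (s12 q).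
Qed.

Lemma aut_consttC pi c x : c \in Aut M -> x \in M ->
  c x = c x.`_pi * c x.`_pi^'.
Proof. by move=> Ac Mx; rewrite -{1}(consttC pi x) (aut_mul Ac) ?constt_in. Qed.

Lemma AutPi_consttC pi c x : c \in AutPi pi -> x \in M ->
  c x = c x.`_pi * x.`_pi^'.
Proof.
case/AutPiP=> Ac cfix Mx; rewrite (aut_consttC pi Ac Mx) (cfix x.`_pi^') //.
  exact: constt_in.
exact: p_elt_constt.
Qed.

Section Disjoint.
Variables pi1 pi2 : nat_pred.
Hypothesis pi12 : {subset pi1 <= pi2^'}.

Let pi1_p2'_elt (x : gT) : pi1.-elt x -> pi2^'.-elt x.
Proof. exact: sub_p_elt. Qed.

Lemma AutPi_cent : AutPi pi1 \subset 'C(AutPi pi2).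
Proof.
apply/subsetP => c Cc; apply/centP => d Cd; apply/permP => z.
have [[Ac cfix] [Ad dfix]] := (AutPiP _ _ Cc, AutPiP _ _ Cd).
rewrite !permM; have [Mz|M'z] := boolP (z \in M); last first.
  by rewrite !(out_Aut Ac, out_Aut Ad).
have [Mz1 Mz1'] := (constt_in pi1 Mz, constt_in pi1^' Mz).
have [cMz1 dMz1'] := (Aut_closed Ac Mz1, Aut_closed Ad Mz1').
have pi1_cz1 : pi1.-elt (c z.`_pi1) by rewrite (aut_p_elt Ac) ?p_elt_constt.
have pi1'_dz1' : pi1^'.-elt (d z.`_pi1^') by rewrite (aut_p_elt Ad) ?p_elt_constt.
rewrite (AutPi_consttC Cc Mz) (aut_mul Ad) // (dfix (c _)) ?pi1_p2'_elt //.
rewrite (aut_consttC pi1 Ad Mz) (dfix z.`_pi1) ?pi1_p2'_elt ?p_elt_constt //.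
by rewrite (aut_mul Ac) // (cfix (d _)).
Qed.

Lemma AutPi_trivI : AutPi pi1 :&: AutPi pi2 = 1.
Proof.
apply/eqP; rewrite eqEsubset sub1G andbT; apply/subsetP => c /setIP[Cc Dc].
have [[Ac cfix] [_ dfix]] := (AutPiP _ _ Cc, AutPiP _ _ Dc).
apply/set1P/permP => z; rewrite perm1.
have [Mz|M'z] := boolP (z \in M); last by rewrite (out_Aut Ac).
rewrite (AutPi_consttC Cc Mz) dfix ?consttC ?constt_in //.
by rewrite pi1_p2'_elt ?p_elt_constt.
Qed.

End Disjoint.

Lemma AutPi_pgroup pi : pi.-group M -> AutPi pi = Aut M.
Proof.
move=> piM; apply/eqP; rewrite eqEsubset subsetIl; apply/subsetP => c Ac.
apply/AutPiP; split=> // x Mx p'x.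
have /eqP x1 : x == 1 by rewrite -order_eq1 (pnat_1 (mem_p_elt piM Mx) p'x).
by rewrite x1 (aut_one Ac).
Qed.

Lemma AutPi_p'group pi : pi^'.-group M -> AutPi pi = 1.
Proof.
move=> p'M; apply/eqP; rewrite eqEsubset sub1G andbT; apply/subsetP => c.
case/AutPiP=> Ac cfix; apply/set1P/permP => z; rewrite perm1.
have [Mz|M'z] := boolP (z \in M); last by rewrite (out_Aut Ac).
exact: cfix (mem_p_elt p'M Mz).
Qed.

Lemma aut_component pi c : c \in Aut M ->
  exists2 d, d \in AutPi pi & {in M, forall x, d x = c x.`_pi * x.`_pi^'}.
Proof.
move=> Ac; pose cf x := c x.`_pi * x.`_pi^'.
have cfM : {in M &, {morph cf : x y / x * y}}.
  move=> x y Mx My; rewrite /cf !consttMM // (aut_mul Ac) ?constt_in //.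
  rewrite !mulgA; congr (_ * _); rewrite -!mulgA; congr (_ * _).
  by apply: commM; rewrite ?(Aut_closed Ac) ?constt_in.
have cfMM x : x \in M -> cf x \in M.
  by move=> Mx; rewrite groupM ?(Aut_closed Ac) ?constt_in.
pose cm : {morphism M >-> gT} := Morphism cfM.
have inj : 'injm cm.
  apply/subsetP => x Kx; have Mx : x \in M := dom_ker Kx.
  have cx1 : cf x = 1 := mker Kx.
  have pi_cx : pi.-elt (c x.`_pi) by rewrite (aut_p_elt Ac) ?constt_in ?p_elt_constt.
  have cf_pi : (cf x).`_pi = c x.`_pi.
    rewrite consttMM ?(Aut_closed Ac) ?constt_in // constt_p_elt //.
    by rewrite (constt1P (p_elt_constt _ _)) mulg1.
  have cf_pi' : (cf x).`_pi^' = x.`_pi^'.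
    have /constt1P cx_pi' : pi^'^'.-elt (c x.`_pi) by rewrite p_eltNK.
    rewrite consttMM ?(Aut_closed Ac) ?constt_in // cx_pi' mul1g.
    exact/constt_p_elt/p_elt_constt.
  have xpi : x.`_pi = 1.
    by apply: (@perm_inj _ c); rewrite (aut_one Ac) -cf_pi cx1 constt1.
  by rewrite inE -(consttC pi x) xpi -cf_pi' cx1 constt1 mulg1.
have im : cm @* M = M.
  apply/(morphim_fixP inj M (subxx _)).
  by apply/subsetP => y /morphimP [x _ Mx ->]; apply: cfMM.
exists (aut inj im) => [|x Mx]; last by rewrite autE.
apply/AutPiP; split=> [|x Mx p'x]; first exact: Aut_aut.
by rewrite autE //= /cf (constt1P p'x) (aut_one Ac) mul1g constt_p_elt.
Qed.

Lemma AutPi_cons_split (p : nat) (qs : seq nat) e :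
  e \in AutPi [pred q in p :: qs] ->
  exists2 d, d \in AutPi p &
    {in 'O_p(M), forall x, d x = e x} /\ d^-1 * e \in AutPi [pred q in qs].
Proof.
case/AutPiP=> Ae efix; have [d Cd dE] := aut_component p Ae.
have Ad : d \in Aut M by case/AutPiP: Cd.
exists d => //; split=> [x Ox|].
  have Mx := subsetP (pcore_sub _ _) x Ox.
  have /constt1P x_p' : p^'^'.-elt x by rewrite p_eltNK -pcore_abelianE.
  by rewrite dE // x_p' mulg1 constt_p_elt // -pcore_abelianE.
have e_d z : z \in M -> [pred q in qs]^'.-elt z -> e z = d z.
  move=> Mz qs'z; rewrite dE // (aut_consttC p Ae Mz) (efix z.`_p^') ?constt_in //.
  have pqs' : [pred q in p :: qs]^' =i [predI p^' & [pred q in qs]^'].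
    by move=> q; rewrite !inE negb_or.
  rewrite /p_elt (eq_pnat _ pqs') pnatI [_.-nat _]p_elt_constt /=.
  exact: mem_p_elt qs'z (cycle_constt _ _).
apply/AutPiP; split=> [|z Mz qs'z]; first by rewrite groupM ?groupV.
have Mw : d^-1 z \in M by rewrite Aut_closed ?groupV.
by rewrite permM e_d ?permKV // (aut_p_elt _ Mz) ?groupV.
Qed.

Definition component_closed (H : {set {perm gT}}) (p : nat) : Prop :=
  forall c d, c \in H -> d \in AutPi p -> {in 'O_p(M), forall x, d x = c x} ->
  d \in H.

Lemma AutPi_dprod (H : {group {perm gT}}) (p : nat) (qs : seq nat) :
  component_closed H p -> p \notin qs ->
  (H :&: AutPi p) \x (H :&: AutPi [pred q in qs]) = H :&: AutPi [pred q in p :: qs].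
Proof.
move=> closedH p'qs; set pqs := [pred q in p :: qs]; set pis := [pred q in qs].
have qs_p' : {subset pis <= (p : nat_pred)^'}.
  by move=> q; rewrite !inE; apply: contraTneq => ->.
have p_qs' : {subset (p : nat_pred) <= pis^'} by move=> q; rewrite !inE => /eqP ->.
have cent : H :&: AutPi pis \subset 'C(H :&: AutPi p).
  apply: subset_trans (subsetIr _ _) _.
  exact: subset_trans (AutPi_cent qs_p') (centS (subsetIr _ _)).
have trivI : (H :&: AutPi p) :&: (H :&: AutPi pis) = 1.
  by apply/trivgP; rewrite -(AutPi_trivI p_qs') setISS ?subsetIr.
have sub_pqs pi : {subset pi <= pqs} -> H :&: AutPi pi \subset H :&: AutPi pqs.
  by move=> spi; apply/setIS/AutPiS.
rewrite dprodE //; apply/eqP; rewrite eqEsubset; apply/andP; split.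
  apply: mul_subG; apply: sub_pqs => q; rewrite !inE => -> //.
  by rewrite orbT.
apply/subsetP => e /setIP[He /AutPi_cons_split[d Cd [d_e Cde]]].
have Hd : d \in H by apply: closedH He Cd d_e.
apply/mulsgP; exists d (d^-1 * e); rewrite ?mulKVg //; apply/setIP => //.
by rewrite groupM ?groupV.
Qed.

Lemma bigdprod_AutPi (H : {group {perm gT}}) (ps : seq nat) :
  uniq ps -> {in ps, forall p, component_closed H p} ->
  \big[dprod/1]_(p <- ps) (H :&: AutComp M p) = H :&: AutPi [pred q in ps].
Proof.
elim: ps => [|p qs IH] /= => [_ _|/andP[p'qs uqs] closedH].
  have p'M : [pred q in [::]]^'.-group M.
    have nil' : {subset \pi(M) <= [pred q in [::]]^'} by move=> q; rewrite !inE.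
    exact: sub_pgroup nil' (pgroup_pi M).
  by rewrite big_nil AutPi_p'group // setIg1.
rewrite big_cons IH ?AutComp_AutPi ?AutPi_dprod //; last first.
  by move=> q qs_q; apply: closedH; rewrite inE qs_q orbT.
by apply: closedH; rewrite inE eqxx.
Qed.

Lemma exponent_pgroup (ps : seq nat) : all prime ps ->
  (exponent M %| \prod_(p <- ps) p)%N -> [pred q in ps].-group M.
Proof.
move=> prime_ps expM; rewrite -pnat_exponent (pnat_dvd expM) //.
rewrite big_seq; apply: (big_ind (pnat _)) => [//|m n|p ps_p].
  by rewrite pnatM => ->.
by rewrite pnatE ?(allP prime_ps).
Qed.

End AbelianParts.

Section Extension.
Variables (gT : finGroupType) (E M : {group gT}) (s : coset_of M -> gT).
Hypotheses (nsME : M <| E) (abM : abelian M)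
  (sectE : forall g, g \in E / M -> s g \in E /\ coset M (s g) = g).

Let sME : M \subset E. Proof. by case/andP: nsME. Qed.
Let nME x : x \in E -> x \in 'N(M).
Proof. by case/andP: nsME => _ /subsetP; apply. Qed.
Let inE_M x : x \in M -> x \in E. Proof. exact: subsetP sME x. Qed.
Let sect_in g : g \in E / M -> s g \in E. Proof. by case/sectE. Qed.
Let sectK g : g \in E / M -> coset M (s g) = g. Proof. by case/sectE. Qed.

Lemma conj_in m y : m \in M -> y \in E -> m ^ y \in M.
Proof. by move=> Mm Ey; rewrite memJ_norm ?nME. Qed.

Lemma coset_eq_mem x y : x \in E -> y \in E -> coset M x = coset M y ->
  x * y^-1 \in M.
Proof.
move=> Ex Ey exy; apply: coset_idr; first by rewrite groupM ?groupV ?nME.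
by rewrite morphM ?morphV ?groupV ?nME //= exy mulgV.
Qed.

Lemma cocycle_in g h : g \in E / M -> h \in E / M -> ext_cocycle s g h \in M.
Proof.
move=> Gg Gh; have Ggh : g * h \in E / M by rewrite groupM.
apply: coset_eq_mem; rewrite ?groupM ?sect_in //.
by rewrite morphM ?nME ?sect_in //= !sectK.
Qed.

Lemma WkerP a : reflect
  [/\ a \in Aut E, {in M, forall x, a x \in M}
    & {in E, forall x, coset M (a x) = coset M x}] (a \in Wker E M).
Proof.
apply: (iffP idP) => [|[Aa aM aC]].
  rewrite !inE => /andP[/andP[Aa /eqP aM] /forallP aC]; split=> // x Ex.
    by rewrite -aM imset_f.
  exact/eqP/(implyP (aC x)).
rewrite in_set [_ \in AutInv _ _]in_set Aa /= eqEcard card_imset ?leqnn ?andbT;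
  last exact: perm_inj.
apply/andP; split; first by apply/subsetP => _ /imsetP[x Mx ->]; rewrite aM.
by apply/forallP => x; apply/implyP => Ex; rewrite aC.
Qed.

Lemma Wker_group_set : group_set (Wker E M).
Proof.
apply/group_setP; split; first by apply/WkerP; split=> [|x|x]; rewrite ?group1 ?perm1.
move=> a b /WkerP[Aa aM aC] /WkerP[Ab bM bC].
apply/WkerP; split=> [|x Mx|x Ex]; rewrite ?groupM ?permM ?bM ?aM //.
by rewrite bC ?aC ?Aut_closed.
Qed.

(* Elements of W normalize M, so restriction to M is a morphism on W. *)
Lemma Wker_norm a : a \in Wker E M -> a \in 'N(M | 'P).
Proof.
case/WkerP=> Aa aM aC; apply/astabsP => z /=; rewrite apermE.
have [Ez|E'z] := boolP (z \in E); last by rewrite (out_Aut Aa).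
apply/idP/idP => [Maz|Mz]; last exact: aM.
by apply: coset_idr; rewrite ?nME // -aC // coset_id.
Qed.

Lemma etaMW_group_set : group_set (etaMW E M).
Proof.
have W1 : (1 : {perm gT}) \in Wker E M by case/group_setP: Wker_group_set.
apply/group_setP; split; first by apply/imsetP; exists 1; rewrite ?morph1.
move=> _ _ /imsetP[a Wa ->] /imsetP[b Wb ->].
apply/imsetP; exists (a * b); first by case/group_setP: Wker_group_set => _; apply.
by rewrite morphM ?Wker_norm.
Qed.

Canonical etaMW_group := Group etaMW_group_set.

Lemma etaMW_Aut : etaMW E M \subset Aut M.
Proof.
apply/subsetP => _ /imsetP[a /WkerP[Aa _ _] ->]; exact: Aut_restr_perm sME _ Aa.
Qed.

(* An element a of W moves each y in E within its coset yM, and M is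
   abelian, so a commutes with the conjugation action of E on M. *)
Lemma Wker_conj a m y : a \in Wker E M -> m \in M -> y \in E ->
  a (m ^ y) = a m ^ y.
Proof.
case/WkerP=> Aa aM aC Mm Ey; have Eay : a y \in E by rewrite Aut_closed.
have May : a y * y^-1 \in M by rewrite coset_eq_mem ?aC.
rewrite (aut_conj Aa) ?(inE_M Mm) //.
by rewrite -[a y](mulgKV y) conjgM (conj_abelian abM (aM m Mm) May).
Qed.

Definition shift (a : {perm gT}) (k : coset_of M) : gT := a (s k) * (s k)^-1.

Lemma shift_in a k : a \in Wker E M -> k \in E / M -> shift a k \in M.
Proof.
case/WkerP=> Aa _ aC Gk; apply: coset_eq_mem; rewrite ?Aut_closed ?sect_in //.
by rewrite aC ?sect_in.
Qed.

Lemma aut_cocycle a g h : a \in Aut E -> g \in E / M -> h \in E / M ->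
  a (ext_cocycle s g h) =
  shift a g * shift a h ^ (s g)^-1 * ext_cocycle s g h * (shift a (g * h))^-1.
Proof.
move=> Aa Gg Gh; have Ggh : g * h \in E / M by rewrite groupM.
rewrite /ext_cocycle /shift !(aut_mul Aa) ?(aut_inv Aa) ?groupM ?groupV ?sect_in //.
by rewrite conjgE invgK !invMg !invgK !mulgA !mulgKV.
Qed.

Section Restriction.
Variables (p : nat) (a c : {perm gT}).
Hypotheses (Wa : a \in Wker E M) (Cc : c \in AutComp M p)
  (c_a : {in 'O_p(M), forall x, c x = a x}).

Let Op_in x : x \in 'O_p(M) -> x \in M.
Proof. exact: subsetP (pcore_sub _ _) x. Qed.

Lemma Cent_of_Wker : c \in Cent_p E M p.
Proof.
rewrite inE Cc; apply/forallP => y; apply/implyP => Ey.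
apply/forallP => m; apply/implyP => Om.
have Omy : m ^ y \in 'O_p(M).
  have nsOpE : 'O_p(M) <| E := char_normal_trans (pcore_char p M) nsME.
  by rewrite memJ_norm // (subsetP (normal_norm nsOpE)).
by rewrite !c_a // Wker_conj ?Op_in.
Qed.

(* ... and fixes the class [eps_p]: c o eps_p - eps_p is the coboundary of
   the p-part of the displacement of s under a. *)
Lemma coboundary_of_Wker :
  is_coboundary_p E p s
    (fun g h => c (ext_cocycle_p s p g h) * (ext_cocycle_p s p g h)^-1).
Proof.
have [Aa _ _] := WkerP a Wa; pose u := shift a.
have Mu k : k \in E / M -> u k \in M by apply: shift_in.
apply/existsP; exists [ffun g => (u g).`_p]; apply/andP; split.
  by apply/forallP => g; apply/implyP => Gg; rewrite ffunE (constt_pcore abM) ?Mu.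
apply/forallP => g; apply/implyP => Gg; apply/forallP => h; apply/implyP => Gh.
have Ggh : g * h \in E / M by rewrite groupM.
rewrite !ffunE /ext_cocycle_p; set e := ext_cocycle s g h.
have Me : e \in M by apply: cocycle_in.
have ae : a e = u g * u h ^ (s g)^-1 * e * (u (g * h))^-1 by apply: aut_cocycle.
rewrite c_a ?(constt_pcore abM) // (aut_constt Aa) ?inE_M // ae -consttJ.
have [Mx My Mz] : [/\ u g \in M, u h ^ (s g)^-1 \in M & u (g * h) \in M].
  by rewrite conj_in ?groupV ?sect_in ?Mu.
clear ae; move: (u g) (u h ^ _) (u (g * h)) e Mx My Mz Me => x y z {}e Mx My Mz Me.
rewrite !(consttMM abM) ?groupM ?groupV // consttV -!mulgA; apply/eqP; do 2!congr (_ * _).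
by rewrite mulgA (commM abM (constt_in p Me)) ?groupV ?constt_in // mulgK.
Qed.

Lemma StabCoh_of_Wker : c \in StabCoh E p s.
Proof. by rewrite inE Cent_of_Wker coboundary_of_Wker. Qed.

End Restriction.

Section Lift.
Variables (c : {perm gT}) (f : coset_of M -> gT).
Hypotheses (Ac : c \in Aut M)
  (cJ : {in M & E, forall m y, c (m ^ y) = c m ^ y})
  (fM : {in E / M, forall g, f g \in M})
  (c_eps : {in E / M &, forall g h, c (ext_cocycle s g h) =
     f g * f h ^ (s g)^-1 * (f (g * h))^-1 * ext_cocycle s g h}).

(* The lift of c along the normal form x = m s(g), m in M, g = xM. *)
Definition lift (x : gT) : gT :=
  c (x * (s (coset M x))^-1) * f (coset M x) * s (coset M x).

Lemma lift_nf m g : m \in M -> g \in E / M -> lift (m * s g) = c m * f g * s g.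
Proof. by move=> Mm Gg; rewrite /lift coset_kerl // sectK // mulgK. Qed.

Lemma normal_form x : x \in E ->
  x * (s (coset M x))^-1 \in M /\ coset M x \in E / M.
Proof.
move=> Ex; have Gx : coset M x \in E / M by apply: mem_quotient.
by split=> //; apply: coset_eq_mem; rewrite ?sect_in ?sectK.
Qed.

(* Multiplicativity of the lift on normal forms: this is where the
   compatibility of c with conjugation and the coboundary condition on
   c o eps are used. *)
Lemma lift_morph_nf m n g h : m \in M -> n \in M -> g \in E / M -> h \in E / M ->
  lift (m * s g * (n * s h)) = lift (m * s g) * lift (n * s h).
Proof.
move=> Mm Mn Gg Gh; have Ggh : g * h \in E / M by rewrite groupM.
have Esg' : (s g)^-1 \in E by rewrite groupV sect_in.
have [Me Mn'] := (cocycle_in Gg Gh, conj_in Mn Esg').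
have xy_nf : m * s g * (n * s h) = m * n ^ (s g)^-1 * ext_cocycle s g h * s (g * h).
  by rewrite /ext_cocycle conjgE invgK !mulgA !mulgKV.
have Mw := groupM (groupM Mm Mn') Me.
rewrite !lift_nf // xy_nf (lift_nf Mw Ggh) (aut_mul Ac (groupM Mm Mn') Me).
rewrite (aut_mul Ac Mm Mn') (cJ Mn Esg') (c_eps Gg Gh).
have e_s : ext_cocycle s g h * s (g * h) = s g * s h by rewrite mulgKV.
have eZ : (f (g * h))^-1 * ext_cocycle s g h * f (g * h) = ext_cocycle s g h.
  by rewrite -mulgA -conjgE (conj_abelian abM Me (fM Ggh)).
have BC : c n ^ (s g)^-1 * f g = f g * c n ^ (s g)^-1.
  by apply: (commM abM); rewrite ?conj_in ?(Aut_closed Ac) ?fM.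
have BDs : s g * (c n * f h) = c n ^ (s g)^-1 * f h ^ (s g)^-1 * s g.
  by rewrite -conjMg conjgE invgK -mulgA mulgKV.
move: (c m) (c n ^ _) (f g) (f h ^ _) (f (g * h)) (ext_cocycle _ _ _) e_s eZ BC BDs.
move=> A Bt C Dt Z e e_s eZ BC BDs.
have e_s' X : X * e * s (g * h) = X * s g * s h by rewrite -mulgA e_s mulgA.
have eZ' X : X * Z^-1 * e * Z = X * e by rewrite -[in RHS]eZ !mulgA.
have BC' X : X * Bt * C = X * C * Bt by rewrite -mulgA BC mulgA.
rewrite [RHS]mulgA -(mulgA _ (s g)) BDs !mulgA.
by rewrite BC' eZ' e_s'.
Qed.

Lemma lift_morph : {in E &, {morph lift : x y / x * y}}.
Proof.
move=> x y /normal_form[Mm Gg] /normal_form[Mn Gh].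
by rewrite -(mulgKV (s (coset M x)) x) -(mulgKV (s (coset M y)) y) lift_morph_nf.
Qed.

(* On M the lift is c itself: the cocycle condition at (1,1) forces
   f 1 = c(s 1) (s 1)^-1. *)
Lemma lift_on_M m : m \in M -> lift m = c m.
Proof.
move=> Mm; have G1 : (1 : coset_of M) \in E / M := group1 _.
have Ms1 : s 1 \in M by apply: coset_idr; rewrite ?nME ?sect_in ?sectK.
have f1 : f 1 = c (s 1) * (s 1)^-1.
  have := c_eps G1 G1; rewrite /ext_cocycle mulg1 mulgK.
  by rewrite (conj_abelian abM (fM G1)) ?groupV // mulgK => ->; rewrite mulgK.
rewrite /lift coset_id // f1 (aut_mul Ac) ?groupV // (aut_inv Ac) //.
by rewrite !mulgA mulgKV mulgKV.
Qed.

Lemma lift_coset x : x \in E -> coset M (lift x) = coset M x.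
Proof.
case/normal_form=> Mm Gx; rewrite /lift coset_kerl ?sectK //.
by rewrite groupM ?fM ?(Aut_closed Ac).
Qed.

Lemma lift_in x : x \in E -> lift x \in E.
Proof.
case/normal_form=> Mm Gx; rewrite /lift groupM ?sect_in ?inE_M //.
by rewrite groupM ?fM ?(Aut_closed Ac).
Qed.

Lemma lift_etaMW : c \in etaMW E M.
Proof.
pose lm : {morphism E >-> gT} := Morphism lift_morph.
have inj : 'injm lm.
  apply/subsetP => x Kx; have Ex : x \in E := dom_ker Kx.
  have lx1 : lift x = 1 := mker Kx.
  have Mx : x \in M by apply: coset_idr; rewrite ?nME // -lift_coset // lx1 morph1.
  by rewrite inE; apply/eqP/(@perm_inj _ c); rewrite -lift_on_M // lx1 (aut_one Ac).
have im : lm @* E = E.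
  apply/(morphim_fixP inj E (subxx _)).
  by apply/subsetP => _ /morphimP[x _ Ex ->]; apply: lift_in.
have aE x : x \in E -> aut inj im x = lift x by move=> Ex; rewrite autE.
have Wa : aut inj im \in Wker E M.
  apply/WkerP; split=> [|x Mx|x Ex]; first exact: Aut_aut.
    by rewrite aE ?inE_M // lift_on_M ?(Aut_closed Ac).
  by rewrite aE ?lift_coset.
apply/imsetP; exists (aut inj im) => //; apply/permP => x.
have [Mx|M'x] := boolP (x \in M).
  by rewrite restr_permE ?Wker_norm // aE ?inE_M // lift_on_M.
by rewrite (out_perm (restr_perm_on _ _)) // (out_Aut Ac).
Qed.

End Lift.

(* An element of C_p commutes with the action of E on all of M: on M_p by
   definition, and on the p'-part since it acts trivially there. *)
Lemma Cent_p_conj p c : c \in Cent_p E M p ->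
  {in M & E, forall m y, c (m ^ y) = c m ^ y}.
Proof.
rewrite inE AutComp_AutPi // => /andP[Cc /forallP cJ] m y Mm Ey.
have Op_m : m.`_p \in 'O_p(M) by apply: constt_pcore.
have c_mp : c (m.`_p ^ y) = c m.`_p ^ y.
  by apply/eqP; move: (cJ y); rewrite Ey => /forallP/(_ m.`_p); rewrite Op_m.
rewrite (AutPi_consttC abM Cc (conj_in Mm Ey)) (AutPi_consttC abM Cc Mm).
by rewrite !consttJ c_mp conjMg.
Qed.

Lemma StabCoh_etaMW p c : c \in StabCoh E p s -> c \in etaMW E M.
Proof.
rewrite inE => /andP[Cc /existsP[f /andP[/forallP fO /forallP fcob]]].
have Cc' : c \in AutPi M p by move: Cc; rewrite inE AutComp_AutPi // => /andP[].
have Ac : c \in Aut M by case/AutPiP: Cc'.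
have fM g : g \in E / M -> f g \in M.
  by move=> Gg; apply: subsetP (pcore_sub p M) _ (implyP (fO g) Gg).
apply: (lift_etaMW (f := f)) Ac (Cent_p_conj Cc) fM _ => g h Gg Gh.
set e := ext_cocycle s g h; have Me : e \in M by apply: cocycle_in.
have /(canRL (mulgKV _)) c_ep : c e.`_p * (e.`_p)^-1 =
    f g * f h ^ (s g)^-1 * (f (g * h))^-1.
  by move: (implyP (fcob g) Gg) => /forallP/(_ h)/implyP/(_ Gh)/eqP.
by rewrite (AutPi_consttC abM Cc' Me) c_ep -mulgA consttC.
Qed.

Lemma etaMW_AutComp p : etaMW E M :&: AutComp M p = StabCoh E p s.
Proof.
apply/setP => c; apply/setIP/idP => [[/imsetP[a Wa ->] Cc]|Sc].
  apply: (StabCoh_of_Wker Wa Cc) => x Ox.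
  exact: restr_permE (Wker_norm Wa) (subsetP (pcore_sub p M) x Ox).
split; first exact: StabCoh_etaMW Sc.
by move: Sc; rewrite inE => /andP[]; rewrite inE => /andP[].
Qed.

Lemma etaMW_component_closed p : component_closed M (etaMW E M) p.
Proof.
move=> _ d /imsetP[a Wa ->] Cd d_a; apply: (StabCoh_etaMW (p := p)).
apply: (StabCoh_of_Wker Wa); first by rewrite AutComp_AutPi.
move=> x Ox; rewrite d_a //.
exact: restr_permE (Wker_norm Wa) (subsetP (pcore_sub p M) x Ox).
Qed.

End Extension.

Theorem lemma4p3 (gT : finGroupType) (E M : {group gT}) (ps : seq nat)
  (s : coset_of M -> gT) :
  M <| E -> abelian M ->
  all prime ps -> uniq ps ->
  (exponent M %| \prod_(p <- ps) p)%N ->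
  (forall g, g \in E / M -> s g \in E /\ coset M (s g) = g) ->
  \big[dprod/1]_(p <- ps) (etaMW E M :&: AutComp M p) = etaMW E M /\
  (forall p, p \in ps -> etaMW E M :&: AutComp M p = StabCoh E p s).
Proof.
move=> nsME abM prime_ps uniq_ps expM sectE; split; last first.
  by move=> p _; apply: etaMW_AutComp.
have closed p : p \in ps -> component_closed M (etaMW_group nsME) p.
  by move=> _; exact: (etaMW_component_closed (s := s) nsME abM sectE).
rewrite (bigdprod_AutPi abM uniq_ps closed) AutPi_pgroup ?exponent_pgroup //.
exact/setIidPl/etaMW_Aut.
Qed.
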